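(* For every positive integer $n$, the Bell number $\mathrm{B}_n$ satisfies \[ \mathrm{B}_n=\sum_{k=1}^n(-1)^{n-k}\Biggl[\sum_{\ell=1}^{k}L(k,\ell)\Biggr]S(n,k), \] where $L(k,\ell)$ are the Lah numbers and $S(n,k)$ are the Stirling numbers of the second kind.
   Context: The Bell numbers $\mathrm{B}_n$ ($n\ge 0$) are defined by the generating function $e^{e^x-1}=\sum_{k=0}^\infty \mathrm{B}_k\frac{x^k}{k!}$; $\mathrm{B}_n$ is the number of partitions of an $n$-element set into nonempty subsets. The Stirling numbers of the second kind are $S(n,k)=\frac1{k!}\sum_{i=0}^k(-1)^i\binom{k}{i}(k-i)^n$, equivalently the number of partitions of an $n$-element set into $k$ nonempty subsets. The Lah numbers are $L(n,k)=\binom{n-1}{k-1}\frac{n!}{k!}$ for $n\ge k\ge 1$, equivalently the number of partitions of an $n$-element set into $k$ nonempty linearly ordered subsets. *)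

From mathcomp Require Import all_boot all_order all_algebra.
Set Implicit Arguments. Unset Strict Implicit. Unset Printing Implicit Defensive.
Import Order.TTheory GRing.Theory Num.Theory.
Local Open Scope ring_scope.

(* Bell number B_n: the number of partitions of an n-element set ('I_n)
   into nonempty blocks (mathcomp's [partition] excludes the empty block). *)
Definition bell (n : nat) : nat :=
  #|[set P : {set {set 'I_n}} | partition P [set: 'I_n]]|.

Definition stirling2 (n k : nat) : rat :=
  (k`!%:R)^-1 * \sum_(0 <= i < k.+1) (-1) ^+ i * ('C(k, i) * (k - i) ^ n)%:R.

(* Lah numbers L(n,k) = C(n-1,k-1) * n!/k!  (used for n >= k >= 1). *)
Definition lah (n k : nat) : rat :=
  'C(n.-1, k.-1)%:R * (n`!%:R / k`!%:R).

From mathcomp Require Import all_boot all_order all_algebra.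
From mathcomp Require Import ring zify.

(* Sorting the maps 'I_n -> 'I_m by their kernel partition gives
   m^n = \sum_k S(n,k) m^_k with S(n,k) the number of partitions into k
   blocks, so B_n = \sum_k S(n,k); as a polynomial identity this reads
   x^n = \sum_k S(n,k) x^_k.  At x = -m the falling factorials become signed
   rising factorials, which expand in falling factorials with Lah
   coefficients.  Comparing coefficients yields
   S(n,l) = \sum_k (-1)^(n-k) S(n,k) L(k,l), and summing over l gives the
   formula. *)

Set Implicit Arguments. Unset Strict Implicit. Unset Printing Implicit Defensive.
Import Order.TTheory GRing.Theory Num.Theory.

Section KernelPartition.

Variables (n : nat) (P : {set {set 'I_n}}).
Hypothesis partP : partition P [set: 'I_n].

Lemma mem_cover_partition (x : 'I_n) : x \in cover P.
Proof. by rewrite (cover_partition partP) inE. Qed.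

Definition block_of (x : 'I_n) : {B : {set 'I_n} | B \in P} :=
  exist _ (pblock P x) (pblock_mem (mem_cover_partition x)).

Lemma block_of_surj (b : {B : {set 'I_n} | B \in P}) : exists x, block_of x == b.
Proof.
case: b => B PB; have /set0Pn[x Bx] := partition_neq0 partP PB.
by exists x; rewrite -val_eqE /= (def_pblock (partition_trivIset partP) PB Bx).
Qed.

Lemma block_of_eq (x y : 'I_n) : (block_of x == block_of y) = (y \in pblock P x).
Proof.
by rewrite -val_eqE /= eq_pblock ?mem_cover_partition ?(partition_trivIset partP).
Qed.

Lemma preim_partition_eqE m (f : {ffun 'I_n -> 'I_m}) :
  (preim_partition f [set: 'I_n] == P) =
  [forall x, forall y, (f x == f y) == (y \in pblock P x)].
Proof.
apply/eqP/forallP => [<- x | fP].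
  apply/forallP => y; apply/eqP.
  by rewrite pblock_equivalence_partition ?inE // => a b c _ _ _; split=> // /eqP->.
rewrite -(equivalence_partition_pblock partP) /preim_partition.
apply: eq_in_imset => x _; apply/setP => y; rewrite !inE.
by move/forallP: (fP x) => /(_ y) /eqP.
Qed.

(* A map with kernel partition P is an injection of the blocks of P into 'I_m. *)
Lemma card_preim_partition m :
  #|[set f : {ffun 'I_n -> 'I_m} | preim_partition f [set: 'I_n] == P]| =
  m ^_ #|P|.
Proof.
have -> : m ^_ #|P| =
    #|[set g : {ffun {B : {set 'I_n} | B \in P} -> 'I_m} | injectiveb g]|.
  by rewrite card_inj_ffuns card_ord card_sig; congr (_ ^_ _); apply: eq_card.
pose lift_blocks (g : {ffun {B : {set 'I_n} | B \in P} -> 'I_m}) :=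
  [ffun x => g (block_of x)].
rewrite -(card_in_imset (f := lift_blocks)); last first.
  move=> g1 g2 _ _ /ffunP g12; apply/ffunP => b.
  by have [x /eqP <-] := block_of_surj b; have := g12 x; rewrite !ffunE.
congr #|pred_of_set _|; apply/setP => f; rewrite inE preim_partition_eqE.
apply/forallP/imsetP => [fP | [g]]; last first.
  rewrite inE => /injectiveP g_inj -> x; apply/forallP => y.
  by rewrite !ffunE (inj_eq g_inj) block_of_eq.
pose g := [ffun b => f (xchoose (block_of_surj b))].
have g_block x : g (block_of x) = f x.
  rewrite ffunE; apply/eqP; rewrite eq_sym.
  move/forallP: (fP x) => /(_ (xchoose _)) /eqP ->.
  by rewrite -block_of_eq eq_sym (xchooseP (block_of_surj _)).
exists g; last by apply/ffunP => x; rewrite ffunE g_block.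
rewrite inE; apply/injectiveP => b1 b2.
have [x1 /eqP <-] := block_of_surj b1; have [x2 /eqP <-] := block_of_surj b2.
rewrite !g_block => f12; apply/eqP; rewrite block_of_eq.
by move/forallP: (fP x1) => /(_ x2) /eqP <-; rewrite f12.
Qed.

End KernelPartition.

Section PartitionsOfOrdinal.

Variable n : nat.

Lemma expn_sum_partitions m :
  m ^ n = \sum_(P : {set {set 'I_n}} | partition P [set: 'I_n]) m ^_ #|P|.
Proof.
rewrite -[m in LHS]card_ord -[n in LHS]card_ord -card_ffun -sum1_card.
rewrite (partition_big (fun f : {ffun 'I_n -> 'I_m} => preim_partition f [set: 'I_n])
   (fun P => partition P [set: 'I_n])) /=; last by move=> f _; apply: preim_partitionP.
apply: eq_bigr => P partP; rewrite -(card_preim_partition partP) -sum1_card.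
by apply: eq_bigl => f; rewrite inE.
Qed.

Lemma card_partition_leq (P : {set {set 'I_n}}) :
  partition P [set: 'I_n] -> #|P| <= n.
Proof.
move=> partP; rewrite -[n in _ <= n]card_ord -cardsT (card_partition partP).
rewrite -sum1_card leq_sum // => B PB.
by rewrite card_gt0 (partition_neq0 partP).
Qed.

Definition npartitions k :=
  #|[set P : {set {set 'I_n}} | partition P [set: 'I_n] & #|P| == k]|.

Lemma sum_partitions_card (F : nat -> nat) :
  \sum_(P : {set {set 'I_n}} | partition P [set: 'I_n]) F #|P| =
  \sum_(k < n.+1) npartitions k * F k.
Proof.
rewrite (partition_big (fun P : {set {set 'I_n}} => inord #|P| : 'I_n.+1) predT) //=.
apply: eq_bigr => k _; rewrite -sum_nat_const.
apply: eq_big => [P | P /andP[partP /eqP <-]]; rewrite ?inE.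
  case partP: (partition P _) => //=.
  by rewrite -val_eqE /= inordK // ltnS card_partition_leq.
by rewrite inordK // ltnS card_partition_leq.
Qed.

Lemma bell_npartitions : bell n = \sum_(k < n.+1) npartitions k.
Proof.
under eq_bigr do rewrite -[npartitions _]muln1.
rewrite -(sum_partitions_card (fun=> 1%N)) /bell -sum1_card.
by apply: eq_bigl => P; rewrite inE.
Qed.

Lemma expn_npartitions m : m ^ n = \sum_(k < n.+1) npartitions k * m ^_ k.
Proof. by rewrite expn_sum_partitions sum_partitions_card. Qed.

End PartitionsOfOrdinal.

Lemma bin_mul_bin_sub k i l : 'C(k, i) * 'C(k - i, l) = 'C(k, l) * 'C(k - l, i).
Proof.
have [ilk | kil] := leqP (i + l) k; last first.
  have [ik | ki] := leqP i k; last first.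
    by rewrite (@bin_small k i) // (@bin_small (k - l) i) ?muln0 //; lia.
  rewrite (@bin_small (k - i) l) ?muln0; last by lia.
  have [lk | kl] := leqP l k; last by rewrite (@bin_small k l).
  by rewrite (@bin_small (k - l) i) ?muln0 //; lia.
have fact_k j1 j2 : j1 + j2 <= k ->
    'C(k, j1) * 'C(k - j1, j2) * (j1`! * j2`! * (k - j1 - j2)`!) = k`!.
  move=> jk; rewrite -[RHS](@bin_fact k j1) -?(@bin_fact (k - j1) j2); [ring | lia..].
apply/eqP; rewrite -(@eqn_pmul2r (i`! * l`! * (k - i - l)`!)) ?muln_gt0 ?fact_gt0 //.
rewrite fact_k // -(fact_k l i) 1?addnC // (subnAC k l i); apply/eqP; ring.
Qed.

Local Open Scope ring_scope.

Section AlternatingBinomialSums.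

Variable R : comNzRingType.

Lemma sum_alternating_bin a N : (a <= N)%N ->
  \sum_(i < N.+1) (-1) ^+ i * ('C(a, i))%:R = (a == 0)%:R :> R.
Proof.
move=> aN; have := exprDn (1 : R) (-1) a; rewrite subrr expr0n => ->.
rewrite (big_ord_widen N.+1 (fun i => 1 ^+ (a - i) * (-1) ^+ i *+ 'C(a, i))) //.
rewrite [RHS]big_mkcond /=; apply: eq_bigr => i _.
case: ifP => ia; first by rewrite expr1n mul1r mulr_natr.
by rewrite bin_small ?mulr0 // ltnNge -ltnS ia.
Qed.

Lemma sum_alternating_bin_ffact k l :
  \sum_(i < k.+1) (-1) ^+ i * ('C(k, i) * (k - i) ^_ l)%:R =
  (l == k)%:R * k`!%:R :> R.
Proof.
have [lk | kl] := leqP l k; last first.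
  rewrite big1 ?(gtn_eqF kl) ?mul0r // => i _.
  by rewrite -bin_ffact mulnA bin_mul_bin_sub (@bin_small k l) // !mul0n mulr0.
transitivity (('C(k, l) * l`!)%:R * \sum_(i < k.+1) (-1) ^+ i * ('C(k - l, i))%:R : R).
  rewrite mulr_sumr; apply: eq_bigr => i _.
  by rewrite -bin_ffact mulnA bin_mul_bin_sub !natrM; ring.
rewrite sum_alternating_bin ?leq_subr // subn_eq0.
have [-> | ne] := eqVneq l k; first by rewrite binn mul1n leqnn mulr1 mul1r.
by rewrite leqNgt ltn_neqAle ne lk mulr0 mul0r.
Qed.

End AlternatingBinomialSums.

Lemma natr_fact_neq0 (R : numDomainType) j : j`!%:R != 0 :> R.
Proof. by rewrite pnatr_eq0 -lt0n fact_gt0. Qed.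

(* Inverting m^n = \sum_l c_l m^_l by finite differences recovers S(n,k). *)
Lemma stirling2_coef n N (c : nat -> rat) :
  (forall m, (m ^ n)%:R = \sum_(l < N) c l * (m ^_ l)%:R) ->
  forall k, stirling2 n k = if (k < N)%N then c k else 0.
Proof.
move=> expn_c k; rewrite /stirling2 big_mkord.
have -> : \sum_(i < k.+1) (-1) ^+ i * ('C(k, i) * (k - i) ^ n)%:R =
    \sum_(l < N) c l * ((nat_of_ord l == k)%:R * k`!%:R).
  transitivity (\sum_(i < k.+1) \sum_(l < N)
                  c l * ((-1) ^+ i * ('C(k, i) * (k - i) ^_ l)%:R)).
    apply: eq_bigr => i _; rewrite natrM expn_c !mulr_sumr.
    by apply: eq_bigr => l _; rewrite natrM; ring.
  rewrite exchange_big; apply: eq_bigr => l _.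
  by rewrite -mulr_sumr sum_alternating_bin_ffact.
case: ifP => kN.
  rewrite (bigD1 (Ordinal kN)) //= eqxx big1 ?addr0.
    by rewrite mul1r mulrCA mulVf ?natr_fact_neq0 // mulr1.
  by move=> l; rewrite -val_eqE /= => /negbTE ->; rewrite !mul0r mulr0.
rewrite big1 ?mulr0 // => l _.
suff /negbTE -> : nat_of_ord l != k by rewrite !mul0r mulr0.
by apply: contraFneq kN => <-.
Qed.

Section FactorialPowers.

Variable R : comNzRingType.
Implicit Types (x : R) (k : nat).

Definition ffactr k x := \prod_(i < k) (x - i%:R).
Definition rfactr k x := \prod_(i < k) (x + i%:R).

Lemma ffactrS k x : ffactr k.+1 x = ffactr k x * (x - k%:R).
Proof. by rewrite /ffactr big_ord_recr. Qed.

Lemma rfactrS k x : rfactr k.+1 x = rfactr k x * (x + k%:R).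
Proof. by rewrite /rfactr big_ord_recr. Qed.

Lemma ffactr_nat m k : ffactr k m%:R = (m ^_ k)%:R :> R.
Proof.
elim: k => [|k IHk]; first by rewrite /ffactr big_ord0.
rewrite ffactrS IHk ffactnSr natrM.
have [km | mk] := leqP k m; first by rewrite natrB.
by rewrite ffact_small ?mul0r.
Qed.

Lemma ffactrN k x : ffactr k (- x) = (-1) ^+ k * rfactr k x.
Proof.
elim: k => [|k IHk]; first by rewrite /ffactr /rfactr !big_ord0 mulr1.
by rewrite ffactrS rfactrS IHk exprS; ring.
Qed.

End FactorialPowers.

(* [lah k l] is only meaningful for 1 <= l <= k; [lah_ext] completes it with
   L(0,0) = 1 and L(k,l) = 0 elsewhere, as needed for the expansion of rising
   into falling factorials. *)
Definition lah_ext k l : rat :=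
  if l == 0%N then (k == 0%N)%:R else if (l <= k)%N then lah k l else 0.

Lemma lah_ext_eq0 k l : (k < l)%N -> lah_ext k l = 0.
Proof. by rewrite /lah_ext; case: l => // l; rewrite ltnNge => /negbTE ->. Qed.

Lemma lah_ext_diag k : lah_ext k k = 1.
Proof.
by rewrite /lah_ext; case: k => // k; rewrite leqnn /lah binn mul1r divff ?natr_fact_neq0.
Qed.

Lemma lah_mul_fact k l : lah k l * l`!%:R = ('C(k.-1, l.-1) * k`!)%:R.
Proof. by rewrite /lah -mulrA divfK ?natr_fact_neq0 // natrM. Qed.

Lemma bin_lah_rec k l : (l < k)%N ->
  (k.+2 * 'C(k.+1, l.+1) = l.+2 * 'C(k, l) + (l.+1 + k.+2) * 'C(k, l.+1))%N.
Proof. by move=> lk; rewrite binS; have := mul_bin_left k l; nia. Qed.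

Lemma lah_extE k l : (0 < l <= k)%N -> lah_ext k l = lah k l.
Proof. by rewrite /lah_ext; case: l => // l /= ->. Qed.

Lemma lah_extSS k l : (l < k)%N ->
  lah_ext k.+1 l.+1 = lah_ext k l + (l.+1 + k)%:R * lah_ext k l.+1.
Proof.
case: k => // k lk; apply: (mulIf (natr_fact_neq0 _ l.+1)).
rewrite mulrDl -mulrA (lah_extE (k := k.+2)) ?(lah_extE (k := k.+1) (l := l.+1))
  ?lah_mul_fact ?ltnS ?(ltnW lk) //=.
case: l lk => [|l] lk.
  have -> : lah_ext k.+1 0 = 0 by [].
  by rewrite mul0r add0r !bin0 -!natrM !mul1n add1n -factS.
rewrite lah_extE ?(ltnW lk) // [(l.+2)`!]factS [X in lah _ _ * X]natrM mulrCA.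
rewrite lah_mul_fact -!natrM -natrD; congr _%:R.
by rewrite [(k.+2)`!]factS mulnCA mulnA (bin_lah_rec (lk : (l < k)%N)); ring.
Qed.

Lemma rfactr_lah k (x : rat) :
  rfactr k x = \sum_(l < k.+1) lah_ext k l * ffactr l x.
Proof.
elim: k => [|k IHk].
  by rewrite /rfactr big_ord0 big_ord1 /lah_ext /ffactr big_ord0 !mulr1.
have shift l : ffactr l x * (x + k%:R) = ffactr l.+1 x + (l + k)%:R * ffactr l x.
  by rewrite ffactrS natrD; ring.
rewrite rfactrS IHk mulr_suml.
under eq_bigr do rewrite -mulrA shift mulrDr mulrA.
rewrite big_split /= big_ord_recr /= [X in _ + X]big_ord_recl /=.
rewrite [RHS]big_ord_recl [in RHS]big_ord_recr /= !lah_ext_diag /bump /=.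
have -> : \sum_(i < k) lah_ext k.+1 (1 + i)%N * ffactr (1 + i)%N x =
    \sum_(i < k) lah_ext k i * ffactr i.+1 x +
    \sum_(i < k) lah_ext k (1 + i)%N * (1 + i + k)%N%:R * ffactr (1 + i)%N x.
  by rewrite -big_split; apply: eq_bigr => i _ /=; rewrite lah_extSS //; ring.
have -> : lah_ext k.+1 0 = 0 by [].
have -> : lah_ext k 0 * (0 + k)%:R = 0.
  by rewrite /lah_ext /=; case: (k) => [|?]; rewrite ?mul0r ?mulr0.
ring.
Qed.

Lemma rfactr_lah_widen k N (x : rat) : (k <= N)%N ->
  rfactr k x = \sum_(l < N.+1) lah_ext k l * ffactr l x.
Proof.
move=> kN; rewrite rfactr_lah.
rewrite (big_ord_widen N.+1 (fun l => lah_ext k l * ffactr l x)) //.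
rewrite big_mkcond; apply: eq_bigr => l _.
by case: ifPn => // /negbTE; rewrite ltnS leqNgt => /negbFE/lah_ext_eq0->; rewrite mul0r.
Qed.

Lemma sum_lah_ext k N : (0 < k <= N)%N ->
  \sum_(l < N.+1) lah_ext k l = \sum_(1 <= l < k.+1) lah k l.
Proof.
case/andP=> k_gt0 kN; rewrite -(big_mkord xpredT) big_ltn //.
rewrite (big_cat_nat _ (n := k.+1)) //=.
rewrite [X in _ + (_ + X)]big_nat_cond [X in _ + (_ + X)]big1; last first.
  by move=> l /andP[/andP[kl _] _]; rewrite lah_ext_eq0.
rewrite addr0 /lah_ext eqxx (negbTE (lt0n_neq0 k_gt0)) add0r.
apply: eq_big_nat => l /andP[l_gt0 lk].
by rewrite (negbTE (lt0n_neq0 l_gt0)) -ltnS lk.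
Qed.

Lemma poly_natr_roots_eq0 (R : numDomainType) (p : {poly R}) :
  (forall m, root p m%:R) -> p = 0.
Proof.
move=> p_roots; apply: (@roots_geq_poly_eq0 _ p [seq i%:R | i <- iota 0 (size p)]).
- by apply/allP => _ /mapP[i _ ->].
- by rewrite map_inj_uniq ?iota_uniq // => i j /eqP; rewrite eqr_nat => /eqP.
- by rewrite size_map size_iota.
Qed.

Lemma stirling2_npartitions n k :
  stirling2 n k = if (k < n.+1)%N then (npartitions n k)%:R else 0.
Proof.
apply: (stirling2_coef (c := fun l => (npartitions n l)%:R)) => m.
by rewrite expn_npartitions natr_sum; apply: eq_bigr => l _; rewrite natrM.
Qed.

Lemma bell_stirling2 n : (bell n)%:R = \sum_(k < n.+1) stirling2 n k :> rat.
Proof.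
rewrite bell_npartitions natr_sum.
by apply: eq_bigr => k _; rewrite stirling2_npartitions ltn_ord.
Qed.

Lemma stirling2_n0 n : (0 < n)%N -> stirling2 n 0 = 0.
Proof. by move=> n_gt0; rewrite /stirling2 big_nat1 bin0 exp0n // muln0 mulr0. Qed.

Lemma exprn_stirling2 n (x : rat) :
  x ^+ n = \sum_(k < n.+1) stirling2 n k * ffactr k x.
Proof.
pose q : {poly rat} :=
  'X^n - \sum_(k < n.+1) stirling2 n k *: \prod_(i < k) ('X - i%:R%:P).
have qE y : q.[y] = y ^+ n - \sum_(k < n.+1) stirling2 n k * ffactr k y.
  rewrite /q hornerD hornerN hornerXn horner_sum; congr (_ - _).
  apply: eq_bigr => k _; rewrite hornerZ horner_prod; congr (_ * _).
  by apply: eq_bigr => i _; rewrite hornerXsubC.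
have q0 : q = 0.
  apply: poly_natr_roots_eq0 => m; rewrite /root qE -natrX subr_eq0.
  rewrite (expn_npartitions n m) natr_sum; apply/eqP/eq_bigr => k _.
  by rewrite stirling2_npartitions ltn_ord ffactr_nat natrM.
by apply/eqP; rewrite -subr_eq0 -qE q0 horner0.
Qed.

Lemma mulr_sign_subn (R : comNzRingType) n k (x y : R) : (k <= n)%N ->
  (-1) ^+ n * (x * ((-1) ^+ k * y)) = (-1) ^+ (n - k) * x * y.
Proof.
move=> kn; rewrite -[n in LHS](subnK kn) exprD mulrCA -!mulrA.
by rewrite [_ ^+ k * (_ * y)]mulrA -expr2 sqrr_sign mul1r mulrCA.
Qed.

Lemma stirling2_lah n l : (l < n.+1)%N ->
  stirling2 n l = \sum_(k < n.+1) (-1) ^+ (n - k) * stirling2 n k * lah_ext k l.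
Proof.
move=> ln; rewrite (stirling2_coef (N := n.+1)
  (c := fun l => \sum_(k < n.+1) (-1) ^+ (n - k) * stirling2 n k * lah_ext k l)) ?ln //.
move=> m; rewrite -[LHS](signrMK n) natrX -exprMn mulN1r.
rewrite (exprn_stirling2 n (- m%:R)) mulr_sumr.
under eq_bigr => k _.
  have kn : (k <= n)%N by rewrite -ltnS.
  rewrite ffactrN mulr_sign_subn // (rfactr_lah_widen _ kn) mulr_sumr.
  under eq_bigr do rewrite ffactr_nat mulrA.
  over.
by rewrite exchange_big /=; apply: eq_bigr => l' _; rewrite mulr_suml.
Qed.

Theorem theorem1 (n : nat) : (0 < n)%N ->
  (bell n)%:R =
    \sum_(1 <= k < n.+1)
      (-1) ^+ (n - k) * (\sum_(1 <= l < k.+1) lah k l) * stirling2 n k :> rat.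
Proof.
move=> n_gt0; rewrite bell_stirling2.
under eq_bigr do rewrite stirling2_lah //.
rewrite exchange_big big_ord_recl /= stirling2_n0 // big1 => [|l _]; last first.
  by rewrite mulr0 mul0r.
rewrite add0r big_add1 /= big_mkord; apply: eq_bigr => k _.
by rewrite /bump /= add1n -mulr_sumr sum_lah_ext ?ltn_ord // mulrAC.
Qed.
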